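(* For each $t\in\{0,1,\dots,T-1\}$, $k\in\mathbb{N}_0$ and $i\in\{1,\dots,N\}$, there exists a target level $\delta_i^{(k,t)}\in\mathbb{Z}$ such that in state $(x,k)$ at epoch $t$ the action $a=\delta_i^{(k,t)}$ is optimal if $x<\delta_i^{(k,t)}$ and the action $a=x$ is optimal otherwise; specifically one may take $\delta_i^{(k,t)}$ to be the smallest minimizer over $a\in\mathbb{Z}$ of $G^{N,i}_t(a,k)$. Moreover, with this choice, $\delta_i^{(k,t)}$ is non-decreasing in $k$.
   Context: Spare parts setting. Fix integers $N\ge1$, $T\ge1$, reals $\alpha_0,\beta_0>0$, and for each $i\in\{1,\dots,N\}$ unit costs $c_v^i,c_h^i,c_b^i>0$ (transportation, holding, backorder) with $c_b^i>c_v^i$. $\mathbb{N}_0=\{0,1,2,\dots\}$, $y^+=\max(y,0)$. For real $r>0$ and $p\in(0,1)$, $NB(r,p)$ is the distribution on $\mathbb{N}_0$ with $P(n)=\frac{\Gamma(n+r)}{\Gamma(r)n!}p^r(1-p)^n$; $NB(0,p)$ is the point mass at $0$. For $t\in\{0,\dots,T\}$ let $p_t=\frac{\beta_0+Nt}{\beta_0+Nt+1}$. At epoch $t$ and statistic $k$ let $Z\sim NB(\alpha_0+k,p_t)$, $K\sim NB((N-1)(\alpha_0+k),p_t)$ independent, and $C_i(a,x,k)=c_v^i(a-x)+c_h^i\mathbb{E}[(a-Z)^+]+c_b^i\mathbb{E}[(Z-a)^+]$. Define $\tilde V^{N,i}_T\equiv0$ and for $t=T-1,\dots,0$, $(x,k)\in\mathbb{Z}\times\mathbb{N}_0$: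 $\tilde V^{N,i}_t(x,k)=\min_{a\in\mathbb{Z},a\ge x}\{C_i(a,x,k)+\mathbb{E}[\tilde V^{N,i}_{t+1}(a-Z,k+Z+K)]\}$. An action (post-order inventory level) $a\ge x$ is optimal if it attains this minimum. For $t\in\{0,\dots,T-1\}$ let $G^{N,i}_t(a,k)=c_v^ia+c_h^i\mathbb{E}[(a-Z)^+]+c_b^i\mathbb{E}[(Z-a)^+]+\mathbb{E}[\tilde V^{N,i}_{t+1}(a-Z,k+Z+K)]$, so that $\tilde V^{N,i}_t(x,k)=\min_{a\ge x}\{G^{N,i}_t(a,k)-c_v^ix\}$. *)

From Stdlib Require Import Reals ZArith.
From Coquelicot Require Import Coquelicot.
Open Scope R_scope.

(* rising factorial r (r+1) ... (r+n-1) = Gamma(n+r)/Gamma(r) (for r>0),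
   and = [n = 0] for r = 0, so NB(0,p) is the point mass at 0. *)
Fixpoint rising (r : R) (n : nat) : R :=
  match n with
  | O => 1
  | S m => rising r m * (r + INR m)
  end.

Definition nb_pmf (r p : R) (n : nat) : R :=
  rising r n / INR (fact n) * Rpower p r * (1 - p) ^ n.

Definition nb_exp (r p : R) (f : nat -> R) : R :=
  Series (fun n => nb_pmf r p n * f n).

Definition nb_exp2 (r r' p : R) (f : nat -> nat -> R) : R :=
  Series (fun z => nb_pmf r p z * Series (fun j => nb_pmf r' p j * f z j)).

Definition pos_part (y : R) : R := Rmax y 0.

Definition p_t (N : nat) (beta0 : R) (t : nat) : R :=
  (beta0 + INR N * INR t) / (beta0 + INR N * INR t + 1).

Definition rZ (alpha0 : R) (k : nat) : R := alpha0 + INR k.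
Definition rK (N : nat) (alpha0 : R) (k : nat) : R := (INR N - 1) * (alpha0 + INR k).

Definition Ccost (N : nat) (alpha0 beta0 cv ch cb : R) (t : nat)
    (a x : Z) (k : nat) : R :=
  cv * (IZR a - IZR x)
  + ch * nb_exp (rZ alpha0 k) (p_t N beta0 t) (fun z => pos_part (IZR a - INR z))
  + cb * nb_exp (rZ alpha0 k) (p_t N beta0 t) (fun z => pos_part (INR z - IZR a)).

Definition EnextV (N : nat) (alpha0 beta0 : R) (t : nat)
    (W : Z -> nat -> R) (a : Z) (k : nat) : R :=
  nb_exp2 (rZ alpha0 k) (rK N alpha0 k) (p_t N beta0 t)
    (fun z j => W (a - Z.of_nat z)%Z (k + z + j)%nat).

Definition Qobj (N : nat) (alpha0 beta0 cv ch cb : R) (t : nat)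
    (W : Z -> nat -> R) (x : Z) (k : nat) (a : Z) : R :=
  Ccost N alpha0 beta0 cv ch cb t a x k + EnextV N alpha0 beta0 t W a k.

(* V with n epochs remaining (epoch t = T - n):
   V_T = 0, V_t(x,k) = min_{a >= x} Qobj (taken as an infimum) *)
Fixpoint Vrem (N T : nat) (alpha0 beta0 cv ch cb : R) (n : nat) : Z -> nat -> R :=
  match n with
  | O => fun _ _ => 0
  | S m => fun x k =>
      real (Glb_Rbar (fun y => exists a : Z, (x <= a)%Z /\
              y = Qobj N alpha0 beta0 cv ch cb (T - S m)
                    (Vrem N T alpha0 beta0 cv ch cb m) x k a))
  end.

Definition Vt (N T : nat) (alpha0 beta0 cv ch cb : R) (t : nat) : Z -> nat -> R :=
  Vrem N T alpha0 beta0 cv ch cb (T - t).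

Definition optimal_action (N T : nat) (alpha0 beta0 cv ch cb : R) (t : nat)
    (x : Z) (k : nat) (a : Z) : Prop :=
  (x <= a)%Z /\
  forall a' : Z, (x <= a')%Z ->
    Qobj N alpha0 beta0 cv ch cb t (Vt N T alpha0 beta0 cv ch cb (t + 1)) x k a
    <= Qobj N alpha0 beta0 cv ch cb t (Vt N T alpha0 beta0 cv ch cb (t + 1)) x k a'.

Definition Gfun (N T : nat) (alpha0 beta0 cv ch cb : R) (t : nat) (a : Z) (k : nat) : R :=
  cv * IZR a
  + ch * nb_exp (rZ alpha0 k) (p_t N beta0 t) (fun z => pos_part (IZR a - INR z))
  + cb * nb_exp (rZ alpha0 k) (p_t N beta0 t) (fun z => pos_part (INR z - IZR a))
  + EnextV N alpha0 beta0 t (Vt N T alpha0 beta0 cv ch cb (t + 1)) a k.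

Definition smallest_minimizer (g : Z -> R) (d : Z) : Prop :=
  (forall a : Z, g d <= g a) /\ (forall a : Z, (a < d)%Z -> g d < g a).

(* At epoch t and statistic k, the objective G_t(a, k) of the order-up-to level a is
   discrete-convex in a: its increment
       cv - cb + (ch + cb) P(Z <= a) + E[ V_{t+1}(a-Z+1, k+Z+K) - V_{t+1}(a-Z, k+Z+K) ]
   is non-decreasing in a, negative for small a and non-negative for large a.  Its sign
   change d_t(k) is the smallest minimiser of G_t( . , k), and ordering up to
   max(x, d_t(k)) is optimal.  The increment is non-increasing in k, because the demand
   laws NB(r, p) increase stochastically with the shape r (NB(r+1, p) is NB(r, p)
   convolved with a geometric law) and because the increments of V_{t+1} are
   non-increasing in k; hence d_t(k) is non-decreasing in k. *)

From Stdlib Require Import Reals ZArith Lia Lra Wf_nat ClassicalEpsilon.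
From Coquelicot Require Import Coquelicot.
Open Scope R_scope.

Lemma is_series_zero : is_series (fun _ : nat => 0) 0.
Proof.
  apply is_series_Reals. intros eps Heps. exists 0%nat. intros n _.
  rewrite sum_cte. unfold R_dist. rewrite Rmult_0_l, Rminus_0_r, Rabs_R0. lra.
Qed.

(* [is_series_ext] stated at type [R], so that the pointwise goals are real equations. *)
Lemma is_series_ext_R (a b : nat -> R) (l : R) :
  (forall n, a n = b n) -> is_series a l -> is_series b l.
Proof. exact (is_series_ext a b l). Qed.

Lemma is_series_mult_l (c : R) (a : nat -> R) (l : R) :
  is_series a l -> is_series (fun n => c * a n) (c * l).
Proof. exact (is_series_scal_l c a l). Qed.

Lemma is_series_mult_l_1 (c : R) (a : nat -> R) :
  is_series a 1 -> is_series (fun n => c * a n) c.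
Proof. intros Ha. pose proof (is_series_mult_l c a 1 Ha) as H. now rewrite Rmult_1_r in H. Qed.

Lemma ex_series_le_R (a b : nat -> R) :
  (forall n, Rabs (a n) <= b n) -> ex_series b -> ex_series a.
Proof. exact (ex_series_le (K := R_AbsRing) (V := R_CompleteNormedModule) a b). Qed.

Lemma is_series_add (a b : nat -> R) (la lb : R) :
  is_series a la -> is_series b lb -> is_series (fun n => a n + b n) (la + lb).
Proof. exact (is_series_plus a b la lb). Qed.

Lemma Series_mono (u v : nat -> R) :
  ex_series u -> ex_series v -> (forall n, u n <= v n) -> Series u <= Series v.
Proof.
  intros Hu Hv Huv.
  assert (Hdiff : Series (fun _ => 0) <= Series (fun n => v n - u n)).
  { apply Series_le; [intros n; specialize (Huv n); lra|].
    exact (ex_series_minus v u Hv Hu). }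
  rewrite (is_series_unique _ _ is_series_zero), Series_minus in Hdiff by assumption. lra.
Qed.

Lemma partial_sum_le_Series (u : nat -> R) (m : nat) :
  (forall n, 0 <= u n) -> ex_series u -> sum_n u m <= Series u.
Proof.
  intros Hu Hex.
  assert (Htail : is_lim_seq (fun n => sum_n u (n + m)) (Series u)).
  { apply (is_lim_seq_incr_n (sum_n u) m). exact (Series_correct _ Hex). }
  assert (Hgrow : forall n, sum_n u m <= sum_n u (n + m)).
  { induction n as [|n IH]; simpl; [lra|]. rewrite sum_Sn. specialize (Hu (S (n + m))).
    unfold plus; simpl; lra. }
  exact (is_lim_seq_le _ _ _ _ Hgrow (is_lim_seq_const _) Htail).
Qed.

Definition nb_coef (r : R) (n : nat) : R := rising r n / INR (fact n).

Lemma INR_fact_pos (n : nat) : 0 < INR (fact n).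
Proof. apply lt_0_INR, lt_O_fact. Qed.

Lemma rising_nonneg (r : R) (n : nat) : 0 <= r -> 0 <= rising r n.
Proof.
  intros Hr; induction n as [|n IH]; simpl; [lra|].
  apply Rmult_le_pos; [exact IH|]. pose proof (pos_INR n); lra.
Qed.

Lemma rising_pos (r : R) (n : nat) : 0 < r -> 0 < rising r n.
Proof.
  intros Hr; induction n as [|n IH]; simpl; [lra|].
  apply Rmult_lt_0_compat; [exact IH|]. pose proof (pos_INR n); lra.
Qed.

Lemma rising_shift (r : R) (n : nat) : rising (r + 1) n * r = rising r n * (r + INR n).
Proof.
  induction n as [|n IH]; simpl; [ring|].
  transitivity (rising (r + 1) n * r * (r + 1 + INR n)); [ring|].
  rewrite IH. destruct n; simpl; ring.
Qed.

Lemma nb_coef_0 (r : R) : nb_coef r 0 = 1.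
Proof. unfold nb_coef; simpl; field. Qed.

Lemma nb_coef_S (r : R) (n : nat) : nb_coef r (S n) = nb_coef r n * (r + INR n) / INR (S n).
Proof.
  unfold nb_coef. simpl rising. rewrite fact_simpl, mult_INR.
  pose proof (INR_fact_pos n). assert (0 < INR (S n)) by (apply lt_0_INR; lia).
  field. lra.
Qed.

Lemma nb_coef_nonneg (r : R) (n : nat) : 0 <= r -> 0 <= nb_coef r n.
Proof. intros; apply Rdiv_le_0_compat; [now apply rising_nonneg | apply INR_fact_pos]. Qed.

Lemma nb_coef_pos (r : R) (n : nat) : 0 < r -> 0 < nb_coef r n.
Proof. intros; apply Rdiv_lt_0_compat; [now apply rising_pos | apply INR_fact_pos]. Qed.

Lemma nb_coef_pascal (r : R) (n : nat) :
  nb_coef (r + 1) (S n) = nb_coef (r + 1) n + nb_coef r (S n).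
Proof.
  assert (Hshift : r * nb_coef (r + 1) n = (r + INR n) * nb_coef r n).
  { unfold nb_coef. pose proof (INR_fact_pos n).
    transitivity (rising (r + 1) n * r / INR (fact n)); [field; lra|].
    rewrite rising_shift. field. lra. }
  rewrite !nb_coef_S. assert (0 < INR (S n)) by (apply lt_0_INR; lia).
  rewrite S_INR in *. apply Rmult_eq_reg_r with (INR n + 1); [|lra].
  field_simplify; lra.
Qed.

(* d'Alembert: the power series [sum_n c_r(n) x^n] has radius of convergence 1. *)
Lemma nb_coef_radius (r : R) : 0 < r -> CV_radius (nb_coef r) = 1.
Proof.
  intros Hr.
  assert (Hratio : is_lim_seq (fun n => Rabs (nb_coef r (S n) / nb_coef r n)) 1).
  { assert (Hinv : is_lim_seq (fun n => / (INR n + 1)) 0).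
    { replace (Finite 0) with (Rbar_inv p_infty) by reflexivity.
      apply is_lim_seq_inv; [|discriminate].
      eapply is_lim_seq_plus; [apply is_lim_seq_INR | apply is_lim_seq_const | reflexivity]. }
    apply is_lim_seq_ext with (fun n => 1 + (r - 1) * / (INR n + 1)).
    - intros n. rewrite nb_coef_S, S_INR.
      pose proof (nb_coef_pos r n Hr). pose proof (pos_INR n).
      rewrite Rabs_right; [field; lra|].
      apply Rle_ge, Rmult_le_pos; [apply Rdiv_le_0_compat; [apply Rmult_le_pos|]|]; try lra.
      left; apply Rinv_0_lt_compat; lra.
    - replace (Finite 1) with (Finite (1 + (r - 1) * 0)) by (f_equal; ring).
      apply is_lim_seq_plus'; [apply is_lim_seq_const|].
      apply is_lim_seq_mult'; [apply is_lim_seq_const | exact Hinv]. }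
  rewrite (CV_radius_finite_DAlembert _ 1).
  - simpl; f_equal; field.
  - intros n; pose proof (nb_coef_pos r n Hr); lra.
  - lra.
  - exact Hratio.
Qed.

Lemma nb_coef_series_ex (r x : R) : 0 < r -> Rabs x < 1 ->
  ex_series (fun n => nb_coef r n * x ^ n).
Proof. intros Hr Hx. apply ex_series_Rabs, CV_disk_inside. now rewrite nb_coef_radius. Qed.

Lemma nb_coef_ode (r x : R) : 0 < r -> Rabs x < 1 ->
  (1 - x) * PSeries (PS_derive (nb_coef r)) x = r * PSeries (nb_coef r) x.
Proof.
  intros Hr Hx. unfold PSeries.
  assert (Hder : forall n, PS_derive (nb_coef r) n = (r + INR n) * nb_coef r n).
  { intros n. unfold PS_derive. rewrite nb_coef_S.
    assert (0 < INR (S n)) by (apply lt_0_INR; lia). field; lra. }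
  assert (Hder_ex : ex_series (fun n => PS_derive (nb_coef r) n * x ^ n)).
  { apply ex_series_Rabs, CV_disk_inside. now rewrite CV_radius_derive, nb_coef_radius. }
  set (b := fun n => INR n * nb_coef r n * x ^ n).
  assert (Hb : ex_series b).
  { apply ex_series_incr_1, ex_series_ext with (fun n => x * (PS_derive (nb_coef r) n * x ^ n)).
    - intros n; unfold b, PS_derive; simpl; ring.
    - exact (ex_series_scal_l x _ Hder_ex). }
  assert (Hsplit : Series (fun n => PS_derive (nb_coef r) n * x ^ n) =
                   r * Series (fun n => nb_coef r n * x ^ n) + Series b).
  { rewrite <- Series_scal_l, <- Series_plus.
    - apply Series_ext; intros n; rewrite Hder; unfold b; ring.
    - exact (ex_series_scal_l r _ (nb_coef_series_ex r x Hr Hx)).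
    - exact Hb. }
  assert (Hshift : Series b = x * Series (fun n => PS_derive (nb_coef r) n * x ^ n)).
  { rewrite Series_incr_1 by exact Hb. rewrite <- Series_scal_l.
    unfold b at 1; simpl INR. rewrite Rmult_0_l, Rmult_0_l, Rplus_0_l.
    apply Series_ext; intros n; unfold b, PS_derive; simpl; ring. }
  lra.
Qed.

Lemma nb_series_identity (r q : R) : 0 < r -> 0 <= q < 1 ->
  PSeries (nb_coef r) q * exp (r * ln (1 - q)) = 1.
Proof.
  intros Hr Hq.
  set (g := fun y => PSeries (nb_coef r) y * exp (r * ln (1 - y))).
  assert (Hflat : forall y, -1 < y < 1 -> is_derive g y 0).
  { intros y Hy.
    assert (Hy' : Rabs y < 1) by (apply Rabs_def1; lra).
    assert (Hf : is_derive (PSeries (nb_coef r)) y (PSeries (PS_derive (nb_coef r)) y)).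
    { apply is_derive_PSeries. now rewrite nb_coef_radius. }
    assert (Hw : is_derive (fun y => exp (r * ln (1 - y))) y
                   (exp (r * ln (1 - y)) * (r * (- / (1 - y))))).
    { auto_derive; [lra|]. replace (1 + - y) with (1 - y) by ring. field. lra. }
    pose proof (is_derive_mult _ _ _ _ _ Hf Hw Rmult_comm) as Hg. cbv beta in Hg.
    match type of Hg with is_derive _ _ ?d => replace d with 0 in Hg; [exact Hg|] end.
    pose proof (nb_coef_ode r y Hr Hy') as Hode. simpl. unfold plus, mult; simpl.
    transitivity (exp (r * ln (1 - y)) / (1 - y) *
      ((1 - y) * PSeries (PS_derive (nb_coef r)) y - r * PSeries (nb_coef r) y));
      [rewrite Hode; ring | field; lra]. }
  destruct (MVT_gen g 0 q (fun _ => 0)) as [c [_ Hc]].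
  - intros y Hy. apply Hflat. unfold Rmin, Rmax in Hy. destruct Rle_dec; lra.
  - intros y Hy. apply continuity_pt_filterlim, (ex_derive_continuous g y).
    eexists. apply Hflat. unfold Rmin, Rmax in Hy. destruct Rle_dec; lra.
  - change (g q = 1). transitivity (g 0); [lra|]. unfold g. rewrite PSeries_0, nb_coef_0.
    replace (1 - 0) with 1 by ring. rewrite ln_1, Rmult_0_r, exp_0. ring.
Qed.

Lemma nb_pmf_coef (r p : R) (n : nat) : nb_pmf r p n = Rpower p r * (nb_coef r n * (1 - p) ^ n).
Proof. unfold nb_pmf, nb_coef; ring. Qed.

Lemma nb_pmf_nonneg (r p : R) (n : nat) : 0 <= r -> 0 < p < 1 -> 0 <= nb_pmf r p n.
Proof.
  intros Hr Hp. rewrite nb_pmf_coef. apply Rmult_le_pos; [unfold Rpower; left; apply exp_pos|].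
  apply Rmult_le_pos; [now apply nb_coef_nonneg | apply pow_le; lra].
Qed.

Lemma nb_total_mass (r p : R) : 0 <= r -> 0 < p < 1 -> is_series (nb_pmf r p) 1.
Proof.
  intros Hr Hp. destruct (Req_dec r 0) as [-> | Hr0].
  - assert (Hrise : forall n, rising 0 (S n) = 0).
    { induction n as [|n IH]; simpl in *; [ring | rewrite IH; ring]. }
    apply is_series_decr_1.
    match goal with |- is_series _ ?v => replace v with 0 end.
    + eapply is_series_ext_R; [|apply is_series_zero].
      intros n; simpl. unfold nb_pmf. rewrite Hrise. unfold Rdiv; ring.
    + unfold plus, opp; simpl. unfold nb_pmf, Rpower; simpl.
      rewrite Rmult_0_l, exp_0. field.
  - assert (Hr' : 0 < r) by lra.
    pose proof (nb_series_identity r (1 - p) Hr' ltac:(lra)) as Hid.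
    replace (1 - (1 - p)) with p in Hid by ring. unfold PSeries in Hid.
    assert (Hsum : is_series (fun n => Rpower p r * (nb_coef r n * (1 - p) ^ n))
                     (Rpower p r * Series (fun n => nb_coef r n * (1 - p) ^ n))).
    { apply is_series_mult_l, Series_correct, nb_coef_series_ex; [exact Hr'|].
      apply Rabs_def1; lra. }
    replace (Rpower p r * Series _) with 1 in Hsum by (unfold Rpower; lra).
    eapply is_series_ext_R; [intros n; symmetry; apply nb_pmf_coef | exact Hsum].
Qed.

Lemma nb_mean (r p : R) : 0 <= r -> 0 < p < 1 ->
  is_series (fun n => nb_pmf r p n * INR n) (r * (1 - p) / p).
Proof.
  intros Hr Hp. apply is_series_decr_1.
  match goal with |- is_series _ ?v => replace v with (r * (1 - p) / p)
    by (unfold plus, opp; simpl; ring) end.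
  apply is_series_ext_R with (fun n => (r * (1 - p) / p) * nb_pmf (r + 1) p n).
  - intros n. unfold nb_pmf. rewrite Rpower_plus, Rpower_1 by lra.
    simpl rising. rewrite fact_simpl, mult_INR, <- rising_shift.
    pose proof (INR_fact_pos n). assert (0 < INR (S n)) by (apply lt_0_INR; lia).
    simpl pow. rewrite S_INR in *. field; lra.
  - apply is_series_mult_l_1, nb_total_mass; lra.
Qed.

Section Expectation.
Variables (r p : R).
Hypothesis (Hr : 0 <= r) (Hp : 0 < p < 1).

Lemma nb_ex_bounded (f : nat -> R) (B : R) :
  (forall n, Rabs (f n) <= B) -> ex_series (fun n => nb_pmf r p n * f n).
Proof.
  intros Hf. apply (ex_series_le_R _ (fun n => B * nb_pmf r p n)).
  - intros n.
    rewrite Rabs_mult, Rabs_right by (apply Rle_ge, nb_pmf_nonneg; auto).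
    rewrite Rmult_comm. apply Rmult_le_compat_r; [apply nb_pmf_nonneg|]; auto.
  - eexists. apply is_series_mult_l, nb_total_mass; auto.
Qed.

(* Functions of at most affine growth are integrable, since [NB(r,p)] has a mean. *)
Lemma nb_ex_affine (f : nat -> R) (a b : R) :
  (forall n, Rabs (f n) <= a + b * INR n) -> ex_series (fun n => nb_pmf r p n * f n).
Proof.
  intros Hf. apply (ex_series_le_R _ (fun n => a * nb_pmf r p n + b * (nb_pmf r p n * INR n))).
  - intros n.
    rewrite Rabs_mult, Rabs_right by (apply Rle_ge, nb_pmf_nonneg; auto).
    replace (a * nb_pmf r p n + b * (nb_pmf r p n * INR n))
      with (nb_pmf r p n * (a + b * INR n)) by ring.
    apply Rmult_le_compat_l; [apply nb_pmf_nonneg|]; auto.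
  - eexists. apply is_series_add; apply is_series_mult_l; [apply nb_total_mass | apply nb_mean]; auto.
Qed.

Lemma nb_exp_ext (f g : nat -> R) : (forall n, f n = g n) -> nb_exp r p f = nb_exp r p g.
Proof. intros H; unfold nb_exp; apply Series_ext; intros n; now rewrite H. Qed.

Lemma nb_exp_const (c : R) : nb_exp r p (fun _ => c) = c.
Proof.
  unfold nb_exp. apply is_series_unique.
  apply is_series_ext_R with (fun n => c * nb_pmf r p n); [intros n; ring|].
  apply is_series_mult_l_1, nb_total_mass; auto.
Qed.

Lemma nb_exp_minus (f g : nat -> R) :
  ex_series (fun n => nb_pmf r p n * f n) -> ex_series (fun n => nb_pmf r p n * g n) ->
  nb_exp r p (fun n => f n - g n) = nb_exp r p f - nb_exp r p g.
Proof.
  intros Hf Hg. unfold nb_exp. rewrite <- Series_minus by assumption.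
  apply Series_ext; intros; ring.
Qed.

Lemma nb_exp_mono (f g : nat -> R) :
  ex_series (fun n => nb_pmf r p n * f n) -> ex_series (fun n => nb_pmf r p n * g n) ->
  (forall n, f n <= g n) -> nb_exp r p f <= nb_exp r p g.
Proof.
  intros Hf Hg Hfg. apply Series_mono; auto.
  intros n. apply Rmult_le_compat_l; [apply nb_pmf_nonneg|]; auto.
Qed.

Lemma nb_exp_mono_bounded (f g : nat -> R) (B : R) :
  (forall n, Rabs (f n) <= B) -> (forall n, Rabs (g n) <= B) ->
  (forall n, f n <= g n) -> nb_exp r p f <= nb_exp r p g.
Proof. intros Hf Hg. apply nb_exp_mono; eapply nb_ex_bounded; eassumption. Qed.

Lemma nb_exp_between (f : nat -> R) (lo hi : R) :
  (forall n, lo <= f n <= hi) -> lo <= nb_exp r p f <= hi.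
Proof.
  intros Hf.
  assert (Hex : forall c, ex_series (fun n => nb_pmf r p n * c)).
  { intros c. apply (nb_ex_bounded (fun _ => c) (Rabs c)). intros; apply Rle_refl. }
  assert (Hfex : ex_series (fun n => nb_pmf r p n * f n)).
  { apply (nb_ex_bounded _ (Rabs lo + Rabs hi)). intros n. specialize (Hf n).
    pose proof (Rle_abs hi). pose proof (Rabs_pos hi). pose proof (Rabs_pos lo).
    pose proof (Rle_abs (- lo)) as Hlo. rewrite Rabs_Ropp in Hlo.
    apply Rabs_le; lra. }
  rewrite <- (nb_exp_const lo) at 1. rewrite <- (nb_exp_const hi).
  split; apply nb_exp_mono; auto; intros n; apply Hf.
Qed.

Lemma nb_exp_nonneg (f : nat -> R) :
  ex_series (fun n => nb_pmf r p n * f n) -> (forall n, 0 <= f n) -> 0 <= nb_exp r p f.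
Proof.
  intros Hf Hpos. rewrite <- (nb_exp_const 0). apply nb_exp_mono; auto.
  apply (nb_ex_bounded _ 0). intros; rewrite Rabs_R0; lra.
Qed.

Lemma nb_exp_affine_le (f : nat -> R) (a b : R) : 0 <= b ->
  (forall n, 0 <= f n <= a + b * INR n) -> nb_exp r p f <= a + b * (r * (1 - p) / p).
Proof.
  intros Hb Hf.
  assert (Hmean : is_series (fun n => nb_pmf r p n * (a + b * INR n)) (a + b * (r * (1 - p) / p))).
  { apply is_series_ext_R with (fun n => a * nb_pmf r p n + b * (nb_pmf r p n * INR n));
      [intros n; ring|].
    replace (a + b * (r * (1 - p) / p)) with (a * 1 + b * (r * (1 - p) / p)) by ring.
    apply is_series_add; apply is_series_mult_l; [apply nb_total_mass | apply nb_mean]; auto. }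
  unfold nb_exp at 1. rewrite <- (is_series_unique _ _ Hmean).
  apply nb_exp_mono; [| eexists; exact Hmean | intros n; apply Hf].
  apply (nb_ex_affine _ a b). intros n. specialize (Hf n). rewrite Rabs_right; lra.
Qed.

End Expectation.

(** * Stochastic order in the shape parameter

    [NB(r+1,p)] is the convolution of [NB(r,p)] with a geometric law, hence
    stochastically larger than [NB(r,p)]: non-increasing bounded functions have a
    smaller expectation under [NB(r+1,p)].  We prove this by comparing partial sums
    (an Abel summation) using the explicit gap between the two distribution functions. *)

Section ShapeDominance.
Variables (r p : R).
Hypothesis (Hr : 0 <= r) (Hp : 0 < p < 1).

(* [nb_conv n = sum_(m <= n) (1-p)^(n-m) P_r(m)], the convolution with the geometric law. *)
Fixpoint nb_conv (n : nat) : R :=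
  match n with
  | O => nb_pmf r p 0
  | S m => (1 - p) * nb_conv m + nb_pmf r p (S m)
  end.

Lemma nb_conv_nonneg (n : nat) : 0 <= nb_conv n.
Proof.
  induction n as [|n IH]; simpl; [apply nb_pmf_nonneg; auto|].
  pose proof (nb_pmf_nonneg r p (S n) Hr Hp).
  apply Rplus_le_le_0_compat; [apply Rmult_le_pos|]; lra.
Qed.

Lemma nb_pmf_succ_shape (n : nat) : nb_pmf (r + 1) p n = p * nb_conv n.
Proof.
  induction n as [|n IH]; simpl nb_conv;
    rewrite !nb_pmf_coef, Rpower_plus, Rpower_1 by lra.
  - rewrite !nb_coef_0. simpl; ring.
  - rewrite nb_coef_pascal. rewrite nb_pmf_coef, Rpower_plus, Rpower_1 in IH by lra.
    simpl pow.
    transitivity (Rpower p r * p * (nb_coef (r + 1) n * (1 - p) ^ n) * (1 - p)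
                  + p * (Rpower p r * (nb_coef r (S n) * ((1 - p) * (1 - p) ^ n)))); [ring|].
    rewrite IH. ring.
Qed.

Lemma nb_cdf_gap (M : nat) :
  sum_n (nb_pmf r p) M - sum_n (nb_pmf (r + 1) p) M = (1 - p) * nb_conv M.
Proof.
  induction M as [|M IH].
  - rewrite !sum_O, nb_pmf_succ_shape. simpl; ring.
  - rewrite !sum_Sn, nb_pmf_succ_shape. unfold plus; simpl.
    transitivity ((sum_n (nb_pmf r p) M - sum_n (nb_pmf (r + 1) p) M)
                  + nb_pmf r p (S M) - p * ((1 - p) * nb_conv M + nb_pmf r p (S M))); [ring|].
    rewrite IH. ring.
Qed.

Lemma nb_cdf_gap_nonneg (M : nat) :
  0 <= sum_n (nb_pmf r p) M - sum_n (nb_pmf (r + 1) p) M.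
Proof. rewrite nb_cdf_gap. apply Rmult_le_pos; [lra | apply nb_conv_nonneg]. Qed.

Lemma nb_partial_gap (h : nat -> R) : (forall n, h (S n) <= h n) -> forall M,
  (sum_n (nb_pmf r p) M - sum_n (nb_pmf (r + 1) p) M) * h M <=
  sum_n (fun n => nb_pmf r p n * h n) M - sum_n (fun n => nb_pmf (r + 1) p n * h n) M.
Proof.
  intros Hh M. induction M as [|M IH]; [rewrite !sum_O; right; ring|].
  rewrite !sum_Sn. unfold plus; simpl.
  pose proof (nb_cdf_gap_nonneg M) as Hgap.
  set (D := sum_n (nb_pmf r p) M - sum_n (nb_pmf (r + 1) p) M) in *.
  assert (D * h (S M) <= D * h M) by (apply Rmult_le_compat_l; auto).
  transitivity (D * h (S M) + (nb_pmf r p (S M) - nb_pmf (r + 1) p (S M)) * h (S M));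
    [right; unfold D; ring | lra].
Qed.

Lemma nb_exp_shape_succ (h : nat -> R) (B : R) :
  (forall n, h (S n) <= h n) -> (forall n, Rabs (h n) <= B) ->
  nb_exp (r + 1) p h <= nb_exp r p h.
Proof.
  intros Hh HB.
  assert (Hr1 : 0 <= r + 1) by lra.
  pose proof (Series_correct _ (nb_ex_bounded r p Hr Hp h B HB)) as E0.
  pose proof (Series_correct _ (nb_ex_bounded (r + 1) p Hr1 Hp h B HB)) as E1.
  pose proof (nb_total_mass r p Hr Hp) as N0. pose proof (nb_total_mass (r + 1) p Hr1 Hp) as N1.
  set (gap := fun M => sum_n (nb_pmf r p) M - sum_n (nb_pmf (r + 1) p) M).
  set (lower := fun M => - B * gap M).
  set (diff := fun M => sum_n (fun n => nb_pmf r p n * h n) M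
                        - sum_n (fun n => nb_pmf (r + 1) p n * h n) M).
  assert (Hlower : is_lim_seq lower (- B * (1 - 1))).
  { apply is_lim_seq_mult'; [apply is_lim_seq_const | apply is_lim_seq_minus'; assumption]. }
  assert (Hdiff : is_lim_seq diff (nb_exp r p h - nb_exp (r + 1) p h)).
  { apply is_lim_seq_minus'; assumption. }
  assert (Hle : forall M, lower M <= diff M).
  { intros M. pose proof (nb_partial_gap h Hh M) as HA. pose proof (nb_cdf_gap_nonneg M).
    specialize (HB M). apply Rabs_le_between in HB.
    assert (- B * gap M <= gap M * h M) by (unfold gap in *; nra).
    unfold lower, diff, gap in *; lra. }
  pose proof (is_lim_seq_le lower diff _ _ Hle Hlower Hdiff) as Hlim. simpl in Hlim. lra.
Qed.

End ShapeDominance.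

Lemma nb_exp_shape_mono (h : nat -> R) (B r p : R) (m : nat) : 0 <= r -> 0 < p < 1 ->
  (forall n, h (S n) <= h n) -> (forall n, Rabs (h n) <= B) ->
  nb_exp (r + INR m) p h <= nb_exp r p h.
Proof.
  intros Hr Hp Hh HB. induction m as [|m IH]; [simpl; rewrite Rplus_0_r; lra|].
  rewrite S_INR, <- Rplus_assoc.
  eapply Rle_trans; [apply (nb_exp_shape_succ (r + INR m) p) with (B := B) | exact IH]; auto.
  pose proof (pos_INR m); lra.
Qed.

(** * Minimising discrete convex functions on [Z] *)

Definition dincr (g : Z -> R) (a : Z) : R := g (a + 1)%Z - g a.

Definition sign_change (D : Z -> R) (d : Z) : Prop :=
  (forall a, (a < d)%Z -> D a < 0) /\ (forall a, (d <= a)%Z -> 0 <= D a).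

Lemma Z_steps_mono (f : Z -> R) (x : Z) :
  (forall a, (x <= a)%Z -> f a <= f (a + 1)%Z) ->
  forall a b, (x <= a)%Z -> (a <= b)%Z -> f a <= f b.
Proof.
  intros Hstep a b Hxa Hab.
  replace b with (a + Z.of_nat (Z.to_nat (b - a)))%Z by lia.
  induction (Z.to_nat (b - a)) as [|n IH]; [rewrite Z.add_0_r; lra|].
  replace (a + Z.of_nat (S n))%Z with (a + Z.of_nat n + 1)%Z by lia.
  eapply Rle_trans; [exact IH | apply Hstep; lia].
Qed.

Lemma Z_steps_strict_left (f : Z -> R) (d : Z) :
  (forall a, (a < d)%Z -> f (a + 1)%Z < f a) -> forall a, (a < d)%Z -> f d < f a.
Proof.
  intros Hstep a Had.
  replace a with (d - Z.of_nat (S (Z.to_nat (d - a - 1))))%Z by lia.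
  induction (Z.to_nat (d - a - 1)) as [|n IH].
  - specialize (Hstep (d - 1)%Z ltac:(lia)).
    replace (d - 1 + 1)%Z with d in Hstep by lia. replace (d - Z.of_nat 1)%Z with (d - 1)%Z by lia.
    exact Hstep.
  - specialize (Hstep (d - Z.of_nat (S (S n)))%Z ltac:(lia)).
    replace (d - Z.of_nat (S (S n)) + 1)%Z with (d - Z.of_nat (S n))%Z in Hstep by lia. lra.
Qed.

Lemma sign_change_exists (D : Z -> R) (a0 L0 : Z) :
  (forall a, D a <= D (a + 1)%Z) -> 0 <= D a0 -> (forall a, (a < L0)%Z -> D a < 0) ->
  exists d, sign_change D d.
Proof.
  intros Hmono Ha0 Hleft.
  assert (HL0a0 : (L0 <= a0)%Z).
  { destruct (Z_lt_le_dec a0 L0) as [Hlt|]; [specialize (Hleft a0 Hlt); lra | assumption]. }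
  destruct (dec_inh_nat_subset_has_unique_least_element (fun n => 0 <= D (L0 + Z.of_nat n)%Z))
    as [m [[Hm Hleast] _]].
  - intros n. destruct (Rle_dec 0 (D (L0 + Z.of_nat n)%Z)); auto.
  - exists (Z.to_nat (a0 - L0)). now replace (L0 + Z.of_nat (Z.to_nat (a0 - L0)))%Z with a0 by lia.
  - exists (L0 + Z.of_nat m)%Z. split.
    + intros a Ha. destruct (Z_lt_le_dec a L0) as [|HaL]; [auto|].
      apply Rnot_le_lt. intros Hnonneg.
      assert (Hle : (m <= Z.to_nat (a - L0))%nat).
      { apply Hleast. now replace (L0 + Z.of_nat (Z.to_nat (a - L0)))%Z with a by lia. }
      lia.
    + intros a Ha. eapply Rle_trans; [exact Hm|].
      apply (Z_steps_mono D (L0 + Z.of_nat m)); auto; lia.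
Qed.

Lemma sign_change_le (D1 D2 : Z -> R) (d1 d2 : Z) :
  (forall a, D2 a <= D1 a) -> sign_change D1 d1 -> sign_change D2 d2 -> (d1 <= d2)%Z.
Proof.
  intros HD [Hneg1 _] [_ Hpos2]. destruct (Z_le_gt_dec d1 d2) as [|Hgt]; [assumption|].
  specialize (Hneg1 d2 ltac:(lia)). specialize (Hpos2 d2 (Z.le_refl _)).
  specialize (HD d2). lra.
Qed.

Lemma sign_change_smallest_minimizer (g : Z -> R) (d : Z) :
  sign_change (dincr g) d -> smallest_minimizer g d.
Proof.
  intros [Hneg Hpos].
  assert (Hleft : forall a, (a < d)%Z -> g d < g a).
  { apply Z_steps_strict_left. intros a Ha. specialize (Hneg a Ha). unfold dincr in Hneg. lra. }
  split; [|exact Hleft].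
  intros a. destruct (Z_lt_le_dec a d) as [Ha|Ha]; [left; auto|].
  apply (Z_steps_mono g d); [| lia | exact Ha].
  intros b Hb. specialize (Hpos b Hb). unfold dincr in Hpos. lra.
Qed.

Lemma sign_change_constrained_min (g : Z -> R) (d x a : Z) :
  sign_change (dincr g) d -> (x <= a)%Z -> g (Z.max x d) <= g a.
Proof.
  intros Hd Ha. destruct (Z_le_gt_dec x d) as [Hxd|Hxd].
  - rewrite Z.max_r by lia. apply (sign_change_smallest_minimizer g d Hd).
  - rewrite Z.max_l by lia. destruct Hd as [_ Hpos].
    apply (Z_steps_mono g x); [| lia | exact Ha].
    intros b Hb. specialize (Hpos b ltac:(lia)). unfold dincr in Hpos. lra.
Qed.

Lemma Glb_Rbar_attained (S : R -> Prop) (m : R) :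
  S m -> (forall y, S y -> m <= y) -> real (Glb_Rbar S) = m.
Proof.
  intros Hm Hlow. rewrite (is_glb_Rbar_unique S m); [reflexivity|].
  split; [intros y Hy; exact (Hlow y Hy) | intros b Hb; exact (Hb m Hm)].
Qed.

Lemma p_t_range (N : nat) (beta0 : R) (t : nat) : 0 < beta0 -> 0 < p_t N beta0 t < 1.
Proof.
  intros Hb. unfold p_t. assert (0 <= INR N * INR t) by (apply Rmult_le_pos; apply pos_INR).
  split; [apply Rdiv_lt_0_compat; lra|].
  apply (Rmult_lt_reg_r (beta0 + INR N * INR t + 1)); [lra|].
  unfold Rdiv. rewrite Rmult_assoc, Rinv_l by lra. lra.
Qed.

Lemma rZ_pos (alpha0 : R) (k : nat) : 0 < alpha0 -> 0 < rZ alpha0 k.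
Proof. unfold rZ; pose proof (pos_INR k); lra. Qed.

Lemma rK_nonneg (N : nat) (alpha0 : R) (k : nat) : (1 <= N)%nat -> 0 < alpha0 -> 0 <= rK N alpha0 k.
Proof.
  intros HN Ha. unfold rK. apply le_INR in HN. simpl in HN.
  apply Rmult_le_pos; [lra|]. pose proof (pos_INR k); lra.
Qed.

Lemma rZ_shift (alpha0 : R) (k k' : nat) : (k <= k')%nat -> rZ alpha0 k' = rZ alpha0 k + INR (k' - k).
Proof. intros H. unfold rZ. rewrite minus_INR by auto. ring. Qed.

Lemma rK_shift (N : nat) (alpha0 : R) (k k' : nat) : (1 <= N)%nat -> (k <= k')%nat ->
  rK N alpha0 k' = rK N alpha0 k + INR ((N - 1) * (k' - k)).
Proof. intros H1 H. unfold rK. rewrite mult_INR, !minus_INR by auto. simpl. ring. Qed.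

Lemma pos_part_nonneg (y : R) : 0 <= pos_part y.
Proof. unfold pos_part, Rmax. destruct Rle_dec; lra. Qed.

Lemma pos_part_abs (y : R) : Rabs (pos_part y) <= Rabs y.
Proof. unfold pos_part, Rmax. destruct Rle_dec; rewrite ?Rabs_R0; auto using Rabs_pos. lra. Qed.

Lemma pos_part_linear (y : R) (n : nat) :
  Rabs (pos_part (y - INR n)) <= Rabs y + 1 * INR n /\
  Rabs (pos_part (INR n - y)) <= Rabs y + 1 * INR n.
Proof.
  pose proof (pos_part_abs (y - INR n)). pose proof (pos_part_abs (INR n - y)).
  pose proof (Rabs_triang y (- INR n)). pose proof (Rabs_triang (INR n) (- y)).
  rewrite Rabs_Ropp, (Rabs_right (INR n)) in * by (apply Rle_ge, pos_INR).
  unfold Rminus in *. split; lra.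
Qed.

Definition ind_le (a : Z) (n : nat) : R := if Z_le_dec (Z.of_nat n) a then 1 else 0.

Lemma ind_le_bounds (a : Z) (n : nat) : 0 <= ind_le a n <= 1.
Proof. unfold ind_le; destruct Z_le_dec; lra. Qed.

Lemma ind_le_abs (a : Z) (n : nat) : Rabs (ind_le a n) <= 1.
Proof. pose proof (ind_le_bounds a n). apply Rabs_le; lra. Qed.

Lemma ind_le_anti_n (a : Z) (n : nat) : ind_le a (S n) <= ind_le a n.
Proof. unfold ind_le; repeat destruct Z_le_dec; try lra. lia. Qed.

Lemma ind_le_mono_a (a : Z) (n : nat) : ind_le a n <= ind_le (a + 1) n.
Proof. unfold ind_le; repeat destruct Z_le_dec; try lra. lia. Qed.

Lemma ind_le_neg (a : Z) (n : nat) : (a < 0)%Z -> ind_le a n = 0.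
Proof. unfold ind_le; destruct Z_le_dec; [lia | reflexivity]. Qed.

Lemma holding_step (a : Z) (n : nat) :
  pos_part (IZR (a + 1) - INR n) - pos_part (IZR a - INR n) = ind_le a n.
Proof.
  unfold ind_le, pos_part. rewrite INR_IZR_INZ, plus_IZR. destruct Z_le_dec as [H|H].
  - apply IZR_le in H. unfold Rmax; repeat destruct Rle_dec; lra.
  - assert (H' : (a + 1 <= Z.of_nat n)%Z) by lia. apply IZR_le in H'. rewrite plus_IZR in H'.
    unfold Rmax; repeat destruct Rle_dec; lra.
Qed.

Lemma backorder_step (a : Z) (n : nat) :
  pos_part (INR n - IZR (a + 1)) - pos_part (INR n - IZR a) = ind_le a n - 1.
Proof.
  unfold ind_le, pos_part. rewrite INR_IZR_INZ, plus_IZR. destruct Z_le_dec as [H|H].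
  - apply IZR_le in H. unfold Rmax; repeat destruct Rle_dec; lra.
  - assert (H' : (a + 1 <= Z.of_nat n)%Z) by lia. apply IZR_le in H'. rewrite plus_IZR in H'.
    unfold Rmax; repeat destruct Rle_dec; lra.
Qed.

(** * Regular value functions

    The inductive invariant satisfied by every [Vt]: non-negative, of affine growth in [k]
    at [x = 0], and with increments in [x] that are bounded, non-decreasing in [x]
    (convexity), non-increasing in [k] (submodularity) and non-positive far left. *)

Definition vincr (V : Z -> nat -> R) (x : Z) (k : nat) : R := V (x + 1)%Z k - V x k.

Record regular (cv M A C : R) (L : Z) (V : Z -> nat -> R) : Prop := {
  reg_M : 0 <= M;
  reg_C : 0 <= C;
  reg_nonneg : forall x k, 0 <= V x k;
  reg_growth : forall k, V 0%Z k <= A + C * INR k;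
  reg_bounds : forall x k, - cv <= vincr V x k <= M;
  reg_convex : forall x k, vincr V x k <= vincr V (x + 1)%Z k;
  reg_submodular : forall x k k', (k <= k')%nat -> vincr V x k' <= vincr V x k;
  reg_left : forall x k, (x < L)%Z -> vincr V x k <= 0
}.

(** * One step of the backward induction *)

Section Stage.
Variables (N : nat) (alpha0 beta0 cv ch cb : R) (t : nat) (V : Z -> nat -> R) (M A C : R) (L : Z).
Hypotheses (HN : (1 <= N)%nat) (Ha0 : 0 < alpha0) (Hb0 : 0 < beta0)
  (Hcv : 0 < cv) (Hch : 0 < ch) (Hcb : 0 < cb) (Hcvb : cv < cb)
  (HV : regular cv M A C L V).

Let p := p_t N beta0 t.
Let r (k : nat) := rZ alpha0 k.
Let s (k : nat) := rK N alpha0 k.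
Let mean (shape : R) := shape * (1 - p) / p.
Let Mc := M + cv.

Lemma p_range : 0 < p < 1.
Proof. apply p_t_range; auto. Qed.

Lemma r_nonneg (k : nat) : 0 <= r k.
Proof. left; apply rZ_pos; auto. Qed.

Lemma s_nonneg (k : nat) : 0 <= s k.
Proof. apply rK_nonneg; auto. Qed.

Lemma Mc_nonneg : 0 <= Mc.
Proof. pose proof (reg_M _ _ _ _ _ _ HV). unfold Mc; lra. Qed.

Lemma abs_le_Mc (y : R) : - cv <= y <= M -> Rabs y <= Mc.
Proof. pose proof (reg_M _ _ _ _ _ _ HV). intros Hy. unfold Mc; apply Rabs_le; lra. Qed.

Lemma vincr_abs (x : Z) (k : nat) : Rabs (vincr V x k) <= Mc.
Proof. apply abs_le_Mc, (reg_bounds _ _ _ _ _ _ HV). Qed.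

(* Bounded increments give [|V x k - V 0 k| <= Mc |x|], hence affine growth. *)
Lemma V_growth (x : Z) (k : nat) : V x k <= A + C * INR k + Mc * IZR (Z.abs x).
Proof.
  pose proof (reg_growth _ _ _ _ _ _ HV k) as H0.
  destruct (Z_le_dec 0 x) as [Hx|Hx].
  - assert (Hdown : - (V 0%Z k - Mc * IZR 0) <= - (V x k - Mc * IZR x)).
    { apply (Z_steps_mono (fun y => - (V y k - Mc * IZR y)) 0); [|lia|exact Hx].
      intros y _. pose proof (vincr_abs y k) as Hy. apply Rabs_le_between in Hy.
      unfold vincr in Hy. rewrite plus_IZR. lra. }
    rewrite Z.abs_eq by lia. simpl IZR in Hdown. lra.
  - assert (Hup : V x k + Mc * IZR x <= V 0%Z k + Mc * IZR 0).
    { apply (Z_steps_mono (fun y => V y k + Mc * IZR y) x); [|lia|lia].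
      intros y _. pose proof (vincr_abs y k) as Hy. apply Rabs_le_between in Hy.
      unfold vincr in Hy. rewrite plus_IZR. lra. }
    rewrite Z.abs_neq, opp_IZR by lia. simpl IZR in Hup. lra.
Qed.

Definition next_inner (a : Z) (k z : nat) : R :=
  nb_exp (s k) p (fun j => V (a - Z.of_nat z)%Z (k + z + j)%nat).

Lemma next_integrand_le (a : Z) (k z j : nat) :
  V (a - Z.of_nat z)%Z (k + z + j)%nat
  <= (A + C * (INR k + INR z) + Mc * (IZR (Z.abs a) + INR z)) + C * INR j.
Proof.
  eapply Rle_trans; [apply V_growth|]. rewrite !plus_INR.
  assert (Habs : IZR (Z.abs (a - Z.of_nat z)) <= IZR (Z.abs a) + INR z).
  { rewrite INR_IZR_INZ, <- plus_IZR. apply IZR_le. lia. }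
  pose proof (Rmult_le_compat_l Mc _ _ Mc_nonneg Habs). lra.
Qed.

Lemma next_inner_ex (a : Z) (k z : nat) :
  ex_series (fun j => nb_pmf (s k) p j * V (a - Z.of_nat z)%Z (k + z + j)%nat).
Proof.
  apply (nb_ex_affine _ _ (s_nonneg k) p_range _
           (A + C * (INR k + INR z) + Mc * (IZR (Z.abs a) + INR z)) C).
  intros j. rewrite Rabs_right by (apply Rle_ge, (reg_nonneg _ _ _ _ _ _ HV)).
  apply next_integrand_le.
Qed.

Lemma next_inner_nonneg (a : Z) (k z : nat) : 0 <= next_inner a k z.
Proof.
  apply (nb_exp_nonneg _ _ (s_nonneg k) p_range); [apply next_inner_ex|].
  intros; apply (reg_nonneg _ _ _ _ _ _ HV).
Qed.

Lemma next_inner_le (a : Z) (k z : nat) :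
  next_inner a k z <= (A + C * INR k + Mc * IZR (Z.abs a) + C * mean (s k)) + (C + Mc) * INR z.
Proof.
  eapply Rle_trans.
  - apply (nb_exp_affine_le _ _ (s_nonneg k) p_range) with
      (a := A + C * (INR k + INR z) + Mc * (IZR (Z.abs a) + INR z)) (b := C);
      [apply (reg_C _ _ _ _ _ _ HV)|].
    intros j; split; [apply (reg_nonneg _ _ _ _ _ _ HV) | apply next_integrand_le].
  - right. unfold mean. ring.
Qed.

Lemma next_outer_ex (a : Z) (k : nat) : ex_series (fun z => nb_pmf (r k) p z * next_inner a k z).
Proof.
  apply (nb_ex_affine _ _ (r_nonneg k) p_range _
           (A + C * INR k + Mc * IZR (Z.abs a) + C * mean (s k)) (C + Mc)).
  intros z. rewrite Rabs_right by (apply Rle_ge, next_inner_nonneg). apply next_inner_le.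
Qed.

Lemma EnextV_nonneg (a : Z) (k : nat) : 0 <= EnextV N alpha0 beta0 t V a k.
Proof.
  apply (nb_exp_nonneg _ _ (r_nonneg k) p_range); [apply next_outer_ex | apply next_inner_nonneg].
Qed.

Lemma EnextV_le (a : Z) (k : nat) : EnextV N alpha0 beta0 t V a k <=
  (A + C * INR k + Mc * IZR (Z.abs a) + C * mean (s k)) + (C + Mc) * mean (r k).
Proof.
  pose proof (reg_C _ _ _ _ _ _ HV). pose proof Mc_nonneg.
  apply (nb_exp_affine_le _ _ (r_nonneg k) p_range); [lra|].
  intros z; split; [apply next_inner_nonneg | apply next_inner_le].
Qed.

Definition incr_inner (s0 : R) (a : Z) (k z : nat) : R :=
  nb_exp s0 p (fun j => vincr V (a - Z.of_nat z)%Z (k + z + j)%nat).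

Definition exp_incr (r0 s0 : R) (a : Z) (k : nat) : R :=
  nb_exp r0 p (incr_inner s0 a k).

Lemma incr_inner_bounds (s0 : R) (a : Z) (k z : nat) : 0 <= s0 ->
  - cv <= incr_inner s0 a k z <= M.
Proof. intros Hs0. apply (nb_exp_between _ _ Hs0 p_range). intros; apply (reg_bounds _ _ _ _ _ _ HV). Qed.

Lemma incr_inner_abs (s0 : R) (a : Z) (k z : nat) : 0 <= s0 -> Rabs (incr_inner s0 a k z) <= Mc.
Proof. intros Hs0. apply abs_le_Mc, incr_inner_bounds, Hs0. Qed.

Lemma exp_incr_bounds (r0 s0 : R) (a : Z) (k : nat) : 0 <= r0 -> 0 <= s0 ->
  - cv <= exp_incr r0 s0 a k <= M.
Proof. intros Hr0 Hs0. apply (nb_exp_between _ _ Hr0 p_range). intros; now apply incr_inner_bounds. Qed.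

Lemma EnextV_dincr (a : Z) (k : nat) :
  dincr (fun b => EnextV N alpha0 beta0 t V b k) a = exp_incr (r k) (s k) a k.
Proof.
  unfold dincr, EnextV, nb_exp2, exp_incr.
  change (nb_exp (r k) p (next_inner (a + 1) k) - nb_exp (r k) p (next_inner a k)
          = nb_exp (r k) p (incr_inner (s k) a k)).
  rewrite <- (nb_exp_minus _ _ _ _ (next_outer_ex (a + 1) k) (next_outer_ex a k)).
  apply nb_exp_ext. intros z. unfold next_inner, incr_inner.
  rewrite <- (nb_exp_minus _ _ _ _ (next_inner_ex (a + 1) k z) (next_inner_ex a k z)).
  apply nb_exp_ext. intros j. unfold vincr.
  now replace (a + 1 - Z.of_nat z)%Z with (a - Z.of_nat z + 1)%Z by lia.
Qed.

Lemma exp_incr_mono_a (r0 s0 : R) (a : Z) (k : nat) : 0 <= r0 -> 0 <= s0 ->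
  exp_incr r0 s0 a k <= exp_incr r0 s0 (a + 1)%Z k.
Proof.
  intros Hr0 Hs0. apply (nb_exp_mono_bounded _ _ Hr0 p_range) with (B := Mc);
    [intros; now apply incr_inner_abs .. |].
  intros z. apply (nb_exp_mono_bounded _ _ Hs0 p_range) with (B := Mc);
    [intros; apply vincr_abs .. |].
  intros j. replace (a + 1 - Z.of_nat z)%Z with (a - Z.of_nat z + 1)%Z by lia.
  apply (reg_convex _ _ _ _ _ _ HV).
Qed.

Lemma exp_incr_left (r0 s0 : R) (a : Z) (k : nat) : 0 <= r0 -> 0 <= s0 -> (a < L)%Z ->
  exp_incr r0 s0 a k <= 0.
Proof.
  intros Hr0 Hs0 Ha. apply (nb_exp_between _ _ Hr0 p_range (incr_inner s0 a k) (- cv) 0).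
  intros z. split; [now apply incr_inner_bounds|].
  apply (nb_exp_between _ _ Hs0 p_range _ (- cv) 0). intros j.
  split; [apply (reg_bounds _ _ _ _ _ _ HV) | apply (reg_left _ _ _ _ _ _ HV); lia].
Qed.

Lemma exp_incr_anti_k (r0 s0 : R) (a : Z) (k k' : nat) : 0 <= r0 -> 0 <= s0 -> (k <= k')%nat ->
  exp_incr r0 s0 a k' <= exp_incr r0 s0 a k.
Proof.
  intros Hr0 Hs0 Hk. apply (nb_exp_mono_bounded _ _ Hr0 p_range) with (B := Mc);
    [intros; now apply incr_inner_abs .. |].
  intros z. apply (nb_exp_mono_bounded _ _ Hs0 p_range) with (B := Mc);
    [intros; apply vincr_abs .. |].
  intros j. apply (reg_submodular _ _ _ _ _ _ HV). lia.
Qed.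

(* A larger shape of [K] decreases the expected increment, by submodularity. *)
Lemma exp_incr_anti_s (r0 s0 : R) (m : nat) (a : Z) (k : nat) : 0 <= r0 -> 0 <= s0 ->
  exp_incr r0 (s0 + INR m) a k <= exp_incr r0 s0 a k.
Proof.
  intros Hr0 Hs0. assert (Hs0m : 0 <= s0 + INR m) by (pose proof (pos_INR m); lra).
  apply (nb_exp_mono_bounded _ _ Hr0 p_range) with (B := Mc); [intros; now apply incr_inner_abs .. |].
  intros z. apply (nb_exp_shape_mono _ Mc _ _ m Hs0 p_range); [|intros; apply vincr_abs].
  intros j. apply (reg_submodular _ _ _ _ _ _ HV). lia.
Qed.

(* A larger shape of [Z] decreases the expected increment: a larger demand both lowers
   the inventory (convexity) and raises the statistic (submodularity). *)
Lemma exp_incr_anti_r (r0 s0 : R) (m : nat) (a : Z) (k : nat) : 0 <= r0 -> 0 <= s0 ->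
  exp_incr (r0 + INR m) s0 a k <= exp_incr r0 s0 a k.
Proof.
  intros Hr0 Hs0. apply (nb_exp_shape_mono _ Mc _ _ m Hr0 p_range); [|intros; now apply incr_inner_abs].
  intros z. apply (nb_exp_mono_bounded _ _ Hs0 p_range) with (B := Mc); [intros; apply vincr_abs .. |].
  intros j. eapply Rle_trans; [apply (reg_submodular _ _ _ _ _ _ HV) with (k := (k + z + j)%nat); lia|].
  replace (a - Z.of_nat z)%Z with (a - Z.of_nat (S z) + 1)%Z by lia.
  apply (reg_convex _ _ _ _ _ _ HV).
Qed.

Lemma exp_incr_anti_stat (a : Z) (k k' : nat) : (k <= k')%nat ->
  exp_incr (r k') (s k') a k' <= exp_incr (r k) (s k) a k.
Proof.
  intros Hk. pose proof (r_nonneg k). pose proof (s_nonneg k).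
  assert (Hr' : r k' = r k + INR (k' - k)) by (apply rZ_shift; exact Hk).
  assert (Hs' : s k' = s k + INR ((N - 1) * (k' - k))) by (apply rK_shift; assumption).
  apply Rle_trans with (exp_incr (r k') (s k') a k);
    [apply exp_incr_anti_k; auto; [apply r_nonneg | apply s_nonneg]|].
  rewrite Hr', Hs'. pose proof (pos_INR (k' - k)).
  apply Rle_trans with (exp_incr (r k + INR (k' - k)) (s k) a k);
    [apply exp_incr_anti_s; auto; lra | apply exp_incr_anti_r; auto].
Qed.

Definition cdf (a : Z) (k : nat) : R := nb_exp (r k) p (ind_le a).

Lemma cdf_ex (a : Z) (k : nat) : ex_series (fun n => nb_pmf (r k) p n * ind_le a n).
Proof. apply (nb_ex_bounded _ _ (r_nonneg k) p_range _ 1), ind_le_abs. Qed.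

Lemma cdf_bounds (a : Z) (k : nat) : 0 <= cdf a k <= 1.
Proof. apply (nb_exp_between _ _ (r_nonneg k) p_range), ind_le_bounds. Qed.

Lemma cdf_mono_a (a : Z) (k : nat) : cdf a k <= cdf (a + 1)%Z k.
Proof. apply (nb_exp_mono _ _ (r_nonneg k) p_range); [apply cdf_ex .. | apply ind_le_mono_a]. Qed.

(* A larger statistic means stochastically larger demand. *)
Lemma cdf_anti_k (a : Z) (k k' : nat) : (k <= k')%nat -> cdf a k' <= cdf a k.
Proof.
  intros Hk. unfold cdf, r. rewrite (rZ_shift alpha0 k k' Hk).
  apply (nb_exp_shape_mono _ 1 _ _ _ (r_nonneg k) p_range); [apply ind_le_anti_n | apply ind_le_abs].
Qed.

Lemma cdf_neg (a : Z) (k : nat) : (a < 0)%Z -> cdf a k = 0.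
Proof.
  intros Ha. unfold cdf. rewrite (nb_exp_ext _ _ _ (fun _ => 0)) by (intros; now apply ind_le_neg).
  apply (nb_exp_const _ _ (r_nonneg k) p_range).
Qed.

Lemma cdf_large (k : nat) (eps : R) : 0 < eps -> exists a, 1 - eps < cdf a k.
Proof.
  intros Heps.
  assert (Hmass : is_lim_seq (sum_n (nb_pmf (r k) p)) 1)
    by exact (nb_total_mass (r k) p (r_nonneg k) p_range).
  apply is_lim_seq_spec in Hmass. destruct (Hmass (mkposreal eps Heps)) as [n0 Hn0].
  specialize (Hn0 n0 (le_n _)). simpl in Hn0. apply Rabs_def2 in Hn0.
  exists (Z.of_nat n0). unfold cdf, nb_exp.
  assert (Hpartial : sum_n (fun n => nb_pmf (r k) p n * ind_le (Z.of_nat n0) n) n0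
                     = sum_n (nb_pmf (r k) p) n0).
  { apply sum_n_ext_loc. intros n Hn. unfold ind_le.
    destruct Z_le_dec; [apply Rmult_1_r | lia]. }
  eapply Rlt_le_trans; [|apply partial_sum_le_Series; [|apply cdf_ex]].
  - rewrite Hpartial. lra.
  - intros n. apply Rmult_le_pos; [apply nb_pmf_nonneg; [apply r_nonneg | apply p_range]|].
    apply ind_le_bounds.
Qed.

Definition stage_cost (a : Z) (k : nat) : R :=
  cv * IZR a
  + ch * nb_exp (r k) p (fun z => pos_part (IZR a - INR z))
  + cb * nb_exp (r k) p (fun z => pos_part (INR z - IZR a))
  + EnextV N alpha0 beta0 t V a k.

Definition cost_incr (a : Z) (k : nat) : R := dincr (fun b => stage_cost b k) a.

Lemma holding_ex (a : Z) (k : nat) : ex_series (fun n => nb_pmf (r k) p n * pos_part (IZR a - INR n)).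
Proof.
  apply (nb_ex_affine _ _ (r_nonneg k) p_range _ (Rabs (IZR a)) 1).
  intros n; apply pos_part_linear.
Qed.

Lemma backorder_ex (a : Z) (k : nat) : ex_series (fun n => nb_pmf (r k) p n * pos_part (INR n - IZR a)).
Proof.
  apply (nb_ex_affine _ _ (r_nonneg k) p_range _ (Rabs (IZR a)) 1).
  intros n; apply pos_part_linear.
Qed.

Lemma cost_incr_eq (a : Z) (k : nat) :
  cost_incr a k = cv - cb + (ch + cb) * cdf a k + exp_incr (r k) (s k) a k.
Proof.
  rewrite <- EnextV_dincr. unfold cost_incr, dincr, stage_cost. cbv beta.
  assert (Hhold : nb_exp (r k) p (fun z => pos_part (IZR (a + 1) - INR z))
                  = nb_exp (r k) p (fun z => pos_part (IZR a - INR z)) + cdf a k).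
  { apply Rplus_eq_reg_r with (- nb_exp (r k) p (fun z => pos_part (IZR a - INR z))).
    transitivity (nb_exp (r k) p (fun z => pos_part (IZR (a + 1) - INR z))
                  - nb_exp (r k) p (fun z => pos_part (IZR a - INR z))); [ring|].
    rewrite <- nb_exp_minus by apply holding_ex.
    rewrite (nb_exp_ext _ _ _ (ind_le a)) by (intros; apply holding_step). unfold cdf; ring. }
  assert (Hback : nb_exp (r k) p (fun z => pos_part (INR z - IZR (a + 1)))
                  = nb_exp (r k) p (fun z => pos_part (INR z - IZR a)) + (cdf a k - 1)).
  { apply Rplus_eq_reg_r with (- nb_exp (r k) p (fun z => pos_part (INR z - IZR a))).
    transitivity (nb_exp (r k) p (fun z => pos_part (INR z - IZR (a + 1)))
                  - nb_exp (r k) p (fun z => pos_part (INR z - IZR a))); [ring|].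
    rewrite <- nb_exp_minus by apply backorder_ex.
    rewrite (nb_exp_ext _ _ _ (fun n => ind_le a n - 1)) by (intros; apply backorder_step).
    rewrite nb_exp_minus, nb_exp_const; [unfold cdf; ring | apply r_nonneg | apply p_range | apply cdf_ex |].
    apply (nb_ex_bounded _ _ (r_nonneg k) p_range (fun _ => 1) 1). intros; rewrite Rabs_R1; lra. }
  rewrite Hhold, Hback, plus_IZR. ring.
Qed.

Lemma cost_incr_mono_a (a : Z) (k : nat) : cost_incr a k <= cost_incr (a + 1)%Z k.
Proof.
  rewrite !cost_incr_eq. pose proof (cdf_mono_a a k).
  pose proof (exp_incr_mono_a (r k) (s k) a k (r_nonneg k) (s_nonneg k)).
  assert ((ch + cb) * cdf a k <= (ch + cb) * cdf (a + 1)%Z k) by (apply Rmult_le_compat_l; lra).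
  lra.
Qed.

Lemma cost_incr_anti_k (a : Z) (k k' : nat) : (k <= k')%nat -> cost_incr a k' <= cost_incr a k.
Proof.
  intros Hk. rewrite !cost_incr_eq. pose proof (cdf_anti_k a k k' Hk).
  pose proof (exp_incr_anti_stat a k k' Hk).
  assert ((ch + cb) * cdf a k' <= (ch + cb) * cdf a k) by (apply Rmult_le_compat_l; lra).
  lra.
Qed.

Lemma cost_incr_left (a : Z) (k : nat) : (a < Z.min 0 L)%Z -> cost_incr a k < 0.
Proof.
  intros Ha. rewrite cost_incr_eq, cdf_neg by lia.
  pose proof (exp_incr_left (r k) (s k) a k (r_nonneg k) (s_nonneg k) ltac:(lia)). lra.
Qed.

(* Once [P(Z <= a) > cb / (ch + cb)] the increment is non-negative. *)
Lemma cost_incr_eventually (k : nat) : exists a, 0 <= cost_incr a k.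
Proof.
  destruct (cdf_large k (ch / (ch + cb))) as [a Ha]; [apply Rdiv_lt_0_compat; lra|].
  exists a. rewrite cost_incr_eq.
  pose proof (exp_incr_bounds (r k) (s k) a k (r_nonneg k) (s_nonneg k)).
  assert (cb < (ch + cb) * cdf a k).
  { replace cb with ((ch + cb) * (1 - ch / (ch + cb))) at 1 by (field; lra).
    apply Rmult_lt_compat_l; lra. }
  lra.
Qed.

Lemma cost_incr_le (a : Z) (k : nat) : cost_incr a k <= cv + ch + M.
Proof.
  rewrite cost_incr_eq. pose proof (cdf_bounds a k).
  pose proof (exp_incr_bounds (r k) (s k) a k (r_nonneg k) (s_nonneg k)).
  assert ((ch + cb) * cdf a k <= ch + cb) by (rewrite <- (Rmult_1_r (ch + cb)) at 2;
    apply Rmult_le_compat_l; lra).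
  lra.
Qed.

Lemma base_stock_levels : exists d : nat -> Z,
  (forall k, sign_change (fun a => cost_incr a k) (d k)) /\
  (forall k k', (k <= k')%nat -> (d k <= d k')%Z).
Proof.
  assert (Hex : forall k, exists d, sign_change (fun a => cost_incr a k) d).
  { intros k. destruct (cost_incr_eventually k) as [a0 Hpos].
    apply (sign_change_exists _ a0 (Z.min 0 L)); auto.
    - intros a; apply cost_incr_mono_a.
    - intros a Ha; now apply cost_incr_left. }
  destruct (choice _ Hex) as [d Hd]. exists d. split; [exact Hd|].
  intros k k' Hk. apply (sign_change_le _ _ _ _ (fun a => cost_incr_anti_k a k k' Hk) (Hd k) (Hd k')).
Qed.

Definition next_value (x : Z) (k : nat) : R :=
  real (Glb_Rbar (fun y => exists a : Z, (x <= a)%Z /\ y = Qobj N alpha0 beta0 cv ch cb t V x k a)).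

Lemma Qobj_stage_cost (x : Z) (k : nat) (a : Z) :
  Qobj N alpha0 beta0 cv ch cb t V x k a = stage_cost a k - cv * IZR x.
Proof. unfold Qobj, Ccost, stage_cost, r, p. ring. Qed.

(* Positive parts and next-stage values are non-negative, so [G_t(a,k) >= cv a]. *)
Lemma stage_cost_ge (a : Z) (k : nat) : cv * IZR a <= stage_cost a k.
Proof.
  unfold stage_cost.
  assert (0 <= nb_exp (r k) p (fun z => pos_part (IZR a - INR z))).
  { apply (nb_exp_nonneg _ _ (r_nonneg k) p_range); [apply holding_ex | intros; apply pos_part_nonneg]. }
  assert (0 <= nb_exp (r k) p (fun z => pos_part (INR z - IZR a))).
  { apply (nb_exp_nonneg _ _ (r_nonneg k) p_range); [apply backorder_ex | intros; apply pos_part_nonneg]. }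
  pose proof (EnextV_nonneg a k).
  assert (0 <= ch * nb_exp (r k) p (fun z => pos_part (IZR a - INR z))) by (apply Rmult_le_pos; lra).
  assert (0 <= cb * nb_exp (r k) p (fun z => pos_part (INR z - IZR a))) by (apply Rmult_le_pos; lra).
  lra.
Qed.

Let A_next := A + (cb + C + Mc) * alpha0 * ((1 - p) / p) + C * (INR N - 1) * alpha0 * ((1 - p) / p).
Let C_next := C + (cb + C + Mc) * ((1 - p) / p) + C * (INR N - 1) * ((1 - p) / p).

Lemma stage_cost_0_le (k : nat) : stage_cost 0%Z k <= A_next + C_next * INR k.
Proof.
  pose proof p_range.
  assert (Hhold : nb_exp (r k) p (fun z => pos_part (IZR 0 - INR z)) <= 0 + 0 * mean (r k)).
  { apply (nb_exp_affine_le _ _ (r_nonneg k) p_range); [lra|]. intros n.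
    pose proof (pos_INR n). split; [apply pos_part_nonneg|].
    unfold pos_part, Rmax. destruct Rle_dec; lra. }
  assert (Hback : nb_exp (r k) p (fun z => pos_part (INR z - IZR 0)) <= 0 + 1 * mean (r k)).
  { apply (nb_exp_affine_le _ _ (r_nonneg k) p_range); [lra|]. intros n.
    pose proof (pos_INR n). split; [apply pos_part_nonneg|].
    unfold pos_part, Rmax. destruct Rle_dec; lra. }
  pose proof (Rmult_le_compat_l ch _ _ (Rlt_le _ _ Hch) Hhold).
  pose proof (Rmult_le_compat_l cb _ _ (Rlt_le _ _ Hcb) Hback).
  pose proof (EnextV_le 0%Z k) as Hnext. rewrite Z.abs_0 in Hnext.
  unfold stage_cost.
  replace (A_next + C_next * INR k)
    with (cv * IZR 0 + ch * (0 + 0 * mean (r k)) + cb * (0 + 1 * mean (r k)) +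
          ((A + C * INR k + Mc * IZR 0 + C * mean (s k)) + (C + Mc) * mean (r k)))
    by (unfold A_next, C_next, mean, r, s, rZ, rK; simpl; field; lra).
  lra.
Qed.

Section BaseStock.
Variable d : nat -> Z.
Hypothesis Hd : forall k, sign_change (fun a => cost_incr a k) (d k).
Hypothesis Hd_mono : forall k k', (k <= k')%nat -> (d k <= d k')%Z.

Lemma base_stock_optimal (x : Z) (k : nat) (a : Z) : (x <= a)%Z ->
  Qobj N alpha0 beta0 cv ch cb t V x k (Z.max x (d k)) <= Qobj N alpha0 beta0 cv ch cb t V x k a.
Proof.
  intros Ha. rewrite !Qobj_stage_cost.
  pose proof (sign_change_constrained_min (fun b => stage_cost b k) (d k) x a (Hd k) Ha). lra.
Qed.

Lemma next_value_eq (x : Z) (k : nat) : next_value x k = stage_cost (Z.max x (d k)) k - cv * IZR x.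
Proof.
  unfold next_value. apply Glb_Rbar_attained.
  - exists (Z.max x (d k)). split; [lia | symmetry; apply Qobj_stage_cost].
  - intros y [a [Ha ->]]. rewrite <- Qobj_stage_cost. now apply base_stock_optimal.
Qed.

(* Below the base-stock level one orders up to it: the value has slope [-cv]. *)
Lemma next_vincr_below (x : Z) (k : nat) : (x < d k)%Z -> vincr next_value x k = - cv.
Proof.
  intros H. unfold vincr. rewrite !next_value_eq, Z.max_r, (Z.max_r x) by lia.
  rewrite plus_IZR. ring.
Qed.

(* Above it one orders nothing: the value has slope [cost_incr x k - cv]. *)
Lemma next_vincr_above (x : Z) (k : nat) : (d k <= x)%Z -> vincr next_value x k = cost_incr x k - cv.
Proof.
  intros H. unfold vincr. rewrite !next_value_eq, Z.max_l, (Z.max_l x) by lia.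
  unfold cost_incr, dincr. rewrite plus_IZR. ring.
Qed.

Lemma next_vincr_cases (x : Z) (k : nat) :
  ((x < d k)%Z /\ vincr next_value x k = - cv) \/
  ((d k <= x)%Z /\ vincr next_value x k = cost_incr x k - cv /\ 0 <= cost_incr x k).
Proof.
  destruct (Z_lt_le_dec x (d k)) as [H|H]; [left; split; [exact H | now apply next_vincr_below]|].
  right. split; [exact H|]. split; [now apply next_vincr_above | now apply (proj2 (Hd k))].
Qed.

Lemma next_value_regular :
  regular cv (ch + M) A_next C_next (d 0%nat) next_value.
Proof.
  pose proof p_range. pose proof Mc_nonneg. pose proof (reg_M _ _ _ _ _ _ HV).
  pose proof (reg_C _ _ _ _ _ _ HV).
  assert (Hq : 0 <= (1 - p) / p) by (apply Rdiv_le_0_compat; lra).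
  assert (HN1 : 0 <= INR N - 1) by (apply le_INR in HN; simpl in HN; lra).
  split.
  - lra.
  - unfold C_next.
    assert (0 <= (cb + C + Mc) * ((1 - p) / p)) by (apply Rmult_le_pos; lra).
    assert (0 <= C * (INR N - 1) * ((1 - p) / p)) by (apply Rmult_le_pos; [apply Rmult_le_pos|]; lra). lra.
  - intros x k. rewrite next_value_eq. pose proof (stage_cost_ge (Z.max x (d k)) k).
    assert (Hx : IZR x <= IZR (Z.max x (d k))) by (apply IZR_le; lia).
    pose proof (Rmult_le_compat_l cv _ _ (Rlt_le _ _ Hcv) Hx). lra.
  - intros k. rewrite next_value_eq. eapply Rle_trans; [|apply stage_cost_0_le].
    pose proof (sign_change_constrained_min (fun b => stage_cost b k) (d k) 0 0 (Hd k) (Z.le_refl _)).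
    simpl in *. lra.
  - intros x k. pose proof (cost_incr_le x k).
    destruct (next_vincr_cases x k) as [[_ ->] | [_ [-> ?]]]; lra.
  - intros x k. destruct (next_vincr_cases x k) as [[? ->] | [? [-> ?]]];
      destruct (next_vincr_cases (x + 1) k) as [[? ->] | [? [-> ?]]]; try lra; [lia|].
    pose proof (cost_incr_mono_a x k). lra.
  - intros x k k' Hk. pose proof (Hd_mono k k' Hk).
    destruct (next_vincr_cases x k) as [[? ->] | [? [-> ?]]];
      destruct (next_vincr_cases x k') as [[? ->] | [? [-> ?]]]; try lra; [lia|].
    pose proof (cost_incr_anti_k x k k' Hk). lra.
  - intros x k Hx. pose proof (Hd_mono 0 k ltac:(lia)). rewrite next_vincr_below by lia. lra.
Qed.

End BaseStock.

Lemma next_value_is_regular : exists M' A' C' L', regular cv M' A' C' L' next_value.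
Proof.
  destruct base_stock_levels as [d [Hd Hd_mono]].
  do 4 eexists. exact (next_value_regular d Hd Hd_mono).
Qed.

Lemma stage_policy : exists d : nat -> Z,
  (forall k, smallest_minimizer (fun a => stage_cost a k) (d k)) /\
  (forall x k a, (x <= a)%Z ->
     Qobj N alpha0 beta0 cv ch cb t V x k (Z.max x (d k)) <= Qobj N alpha0 beta0 cv ch cb t V x k a) /\
  (forall k k', (k <= k')%nat -> (d k <= d k')%Z).
Proof.
  destruct base_stock_levels as [d [Hd Hd_mono]]. exists d. split; [|split].
  - intros k. apply sign_change_smallest_minimizer, Hd.
  - intros x k a. apply (base_stock_optimal d Hd).
  - exact Hd_mono.
Qed.

End Stage.

Lemma Vrem_regular (N T : nat) (alpha0 beta0 cv ch cb : R) (n : nat) :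
  (1 <= N)%nat -> 0 < alpha0 -> 0 < beta0 -> 0 < cv -> 0 < ch -> 0 < cb -> cv < cb ->
  exists M A C L, regular cv M A C L (Vrem N T alpha0 beta0 cv ch cb n).
Proof.
  intros HN Ha0 Hb0 Hcv Hch Hcb Hcvb. induction n as [|n [M [A [C [L HV]]]]].
  - exists 0, 0, 0, 0%Z. split; unfold vincr; simpl; intros; lra.
  - exact (next_value_is_regular N alpha0 beta0 cv ch cb (T - S n) _ M A C L
             HN Ha0 Hb0 Hcv Hch Hcb Hcvb HV).
Qed.

Theorem proposition5
  (N T : nat) (alpha0 beta0 : R) (cv ch cb : nat -> R)
  (HN : (1 <= N)%nat) (HT : (1 <= T)%nat)
  (Ha0 : 0 < alpha0) (Hb0 : 0 < beta0)
  (Hc : forall i : nat, (1 <= i <= N)%nat ->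
          0 < cv i /\ 0 < ch i /\ 0 < cb i /\ cv i < cb i) :
  forall i : nat, (1 <= i <= N)%nat ->
  exists delta : nat -> nat -> Z,
    (forall t k : nat, (t < T)%nat ->
       smallest_minimizer (fun a => Gfun N T alpha0 beta0 (cv i) (ch i) (cb i) t a k)
                          (delta t k)) /\
    (forall (t k : nat) (x : Z), (t < T)%nat ->
       ((x < delta t k)%Z ->
          optimal_action N T alpha0 beta0 (cv i) (ch i) (cb i) t x k (delta t k)) /\
       ((delta t k <= x)%Z ->
          optimal_action N T alpha0 beta0 (cv i) (ch i) (cb i) t x k x)) /\
    (forall t k k' : nat, (t < T)%nat -> (k <= k')%nat ->
       (delta t k <= delta t k')%Z).
Proof.
  intros i Hi. destruct (Hc i Hi) as [Hcv [Hch [Hcb Hcvb]]].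
  assert (Hpolicy : forall t, exists d : nat -> Z,
    (forall k, smallest_minimizer (fun a => Gfun N T alpha0 beta0 (cv i) (ch i) (cb i) t a k) (d k)) /\
    (forall x k a, (x <= a)%Z ->
       Qobj N alpha0 beta0 (cv i) (ch i) (cb i) t (Vt N T alpha0 beta0 (cv i) (ch i) (cb i) (t + 1))
         x k (Z.max x (d k))
       <= Qobj N alpha0 beta0 (cv i) (ch i) (cb i) t (Vt N T alpha0 beta0 (cv i) (ch i) (cb i) (t + 1))
         x k a) /\
    (forall k k', (k <= k')%nat -> (d k <= d k')%Z)).
  { intros t.
    destruct (Vrem_regular N T alpha0 beta0 (cv i) (ch i) (cb i) (T - (t + 1)) HN Ha0 Hb0 Hcv Hch Hcb Hcvb)
      as [M [A [C [L HV]]]].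
    exact (stage_policy N alpha0 beta0 (cv i) (ch i) (cb i) t _ M A C L HN Ha0 Hb0 Hcv Hch Hcb Hcvb HV). }
  destruct (choice _ Hpolicy) as [delta Hdelta]. exists delta. split; [|split].
  - intros t k _. apply (proj1 (Hdelta t)).
  - intros t k x _. destruct (Hdelta t) as [_ [Hopt _]].
    split; intros Hx; (split; [lia|]); intros a Ha; specialize (Hopt x k a Ha).
    + rewrite Z.max_r in Hopt by lia. exact Hopt.
    + rewrite Z.max_l in Hopt by lia. exact Hopt.
  - intros t k k' _ Hk. exact (proj2 (proj2 (Hdelta t)) k k' Hk).
Qed.
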